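(* Let $G$ be a simple connected graph and let $v$ be an eigenvector of $\mathcal M$ with $\mathcal Mv=\mu v$, $\mu>0$, $\|v\|_2=1$. Let $S=\{i: v_i\ge0\}$. If $$\mu>\frac{(\mathrm{vol}\, S)^2+(\mathrm{vol}\, \bar S)^2}{\mathrm{vol}\, V}\,\max_{i\in V}\frac{v_i^2}{d_i},$$ then $Q(S)>0$.
   Context: $G=(V,E)$ is a finite, undirected, unweighted, simple connected graph with adjacency matrix $A$, degrees $d_i$, $D=\mathrm{Diag}(d_i)$, $\delta=(\sqrt{d_i})_i$, $\mathrm{vol}\, S=\sum_{i\in S}d_i$, $\bar S=V\setminus S$, $\mathbb 1_S$ the characteristic vector of $S$. $\mathcal M=D^{-1/2}AD^{-1/2}-\frac{1}{\mathrm{vol}\, V}\delta\delta^{\mathsf T}$. The modularity of $S$ is $Q(S)=\mathbb 1_S^{\mathsf T}A\mathbb 1_S-(\mathrm{vol}\, S)^2/\mathrm{vol}\, V$. *)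

From HB Require Import structures.
From mathcomp Require Import all_boot all_order all_algebra.
Set Implicit Arguments. Unset Strict Implicit. Unset Printing Implicit Defensive.
Import Order.TTheory GRing.Theory Num.Theory.
Local Open Scope ring_scope.

Definition simple_graph (n : nat) (e : rel 'I_n) : Prop :=
  symmetric e /\ irreflexive e.

Definition connected_graph (n : nat) (e : rel 'I_n) : Prop :=
  forall i j : 'I_n, connect e i j.

Definition adjmx (R : nzRingType) (n : nat) (e : rel 'I_n) : 'M[R]_n :=
  \matrix_(i, j) (e i j)%:R.

Definition deg (n : nat) (e : rel 'I_n) (i : 'I_n) : nat := #|[set j | e i j]|.

Definition vol (n : nat) (e : rel 'I_n) (S : {set 'I_n}) : nat :=
  (\sum_(i in S) deg e i)%N.

Definition invsqrtD (R : rcfType) (n : nat) (e : rel 'I_n) : 'M[R]_n :=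
  diag_mx (\row_i (Num.sqrt ((deg e i)%:R : R))^-1).

Definition sqrtdeg (R : rcfType) (n : nat) (e : rel 'I_n) : 'cV[R]_n :=
  \col_i Num.sqrt ((deg e i)%:R : R).

Definition modmx (R : rcfType) (n : nat) (e : rel 'I_n) : 'M[R]_n :=
  invsqrtD R e *m adjmx R e *m invsqrtD R e
  - ((vol e setT)%:R : R)^-1 *: (sqrtdeg R e *m (sqrtdeg R e)^T).

Definition charvec (R : nzRingType) (n : nat) (S : {set 'I_n}) : 'cV[R]_n :=
  \col_i (i \in S)%:R.

Definition modularity (R : rcfType) (n : nat) (e : rel 'I_n) (S : {set 'I_n}) : R :=
  ((charvec R S)^T *m adjmx R e *m charvec R S) 0 0
  - ((vol e S)%:R ^+ 2) / (vol e setT)%:R.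

From HB Require Import structures.
From mathcomp Require Import all_boot all_order all_algebra.
From mathcomp Require Import ring lra.
Import Order.TTheory GRing.Theory Num.Theory.
Set Implicit Arguments. Unset Strict Implicit. Unset Printing Implicit Defensive.
Local Open Scope ring_scope.

(* With u := D^{-1/2} v, the Rayleigh quotient gives
   mu = u^T A u - (delta^T v)^2 / vol V <= u^T A u.  Since u has the sign
   pattern of S, the terms u_i u_j of u^T A u across the cut (S, ~S) are
   nonpositive and the others are at most max_i u_i^2 = max_i v_i^2 / d_i,
   so mu <= max_i (v_i^2 / d_i) (e(S,S) + e(~S,~S)), where e(X,Y) counts
   ordered edges from X to Y.  Writing x = e(S,S), y = e(~S,~S) and
   c = e(S,~S) = e(~S,S), one has vol S = x + c, vol ~S = y + c and
   vol V = x + y + 2c, and the identity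
   x + y - ((vol S)^2 + (vol ~S)^2) / vol V = 2 Q(S)
   turns the hypothesis on mu into Q(S) > 0. *)

Definition adjform (R : nzRingType) (n : nat) (e : rel 'I_n)
    (u w : 'cV[R]_n) : R :=
  (u^T *m adjmx R e *m w) 0 0.

Section AdjacencyForm.
Variables (R : realDomainType) (n : nat) (e : rel 'I_n).

Lemma adjformE (u w : 'cV[R]_n) :
  adjform e u w = \sum_i \sum_j (e i j)%:R * (u i 0 * w j 0).
Proof.
rewrite /adjform mxE exchange_big /=; apply: eq_bigr => i _.
rewrite !mxE big_distrl /=; apply: eq_bigr => j _.
by rewrite !mxE; ring.
Qed.

Lemma adjformDr (u w1 w2 : 'cV[R]_n) :
  adjform e u (w1 + w2) = adjform e u w1 + adjform e u w2.
Proof. by rewrite /adjform mulmxDr mxE. Qed.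

Lemma adjformC (u w : 'cV[R]_n) : symmetric e -> adjform e u w = adjform e w u.
Proof.
move=> esym; rewrite !adjformE exchange_big.
by apply: eq_bigr => i _; apply: eq_bigr => j _; rewrite esym [u _ 0 * _]mulrC.
Qed.

Lemma adjform_ge0 (u w : 'cV[R]_n) :
  (forall i, 0 <= u i 0) -> (forall j, 0 <= w j 0) -> 0 <= adjform e u w.
Proof.
move=> u0 w0; rewrite adjformE.
by apply: sumr_ge0 => i _; apply: sumr_ge0 => j _; rewrite !mulr_ge0.
Qed.

Lemma charvec_ge0 (S : {set 'I_n}) i : 0 <= charvec R S i 0.
Proof. by rewrite mxE ler0n. Qed.

Lemma charvecDC (S : {set 'I_n}) :
  charvec R S + charvec R (~: S) = charvec R setT.
Proof.
by apply/matrixP => i j; rewrite !mxE !inE; case: (i \in S); rewrite ?addr0 ?add0r.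
Qed.

Lemma adjform_charvecT (S : {set 'I_n}) :
  adjform e (charvec R S) (charvec R setT) = (vol e S)%:R.
Proof.
rewrite adjformE /vol natr_sum [RHS]big_mkcond; apply: eq_bigr => i _ /=.
under eq_bigr => j _ do rewrite !mxE inE mulr1.
case: (i \in S); last by rewrite big1 // => j _; rewrite mulr0.
rewrite /deg -sum1_card natr_sum [RHS]big_mkcond; apply: eq_bigr => j _ /=.
by rewrite inE mulr1; case: (e i j).
Qed.

Lemma vol_setTC (S : {set 'I_n}) : vol e setT = (vol e S + vol e (~: S))%N.
Proof. by rewrite /vol (big_setID S) /= setTI setTD. Qed.

Lemma mul_le_sqr_bound (a b M : R) : a ^+ 2 <= M -> b ^+ 2 <= M -> a * b <= M.
Proof. by move=> aM bM; nra. Qed.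

Lemma adjform_sign_split (u : 'cV[R]_n) (S : {set 'I_n}) (M : R) :
  (forall i, i \in S -> 0 <= u i 0) -> (forall i, i \notin S -> u i 0 <= 0) ->
  (forall i, u i 0 ^+ 2 <= M) ->
  adjform e u u <= M * (adjform e (charvec R S) (charvec R S)
                        + adjform e (charvec R (~: S)) (charvec R (~: S))).
Proof.
move=> uS uC uM; rewrite !adjformE -big_split mulr_sumr /=.
apply: ler_sum => i _; rewrite -big_split mulr_sumr /=; apply: ler_sum => j _.
rewrite !mxE !inE -mulrDr [M * _]mulrCA; apply: ler_wpM2l; first exact: ler0n.
case iS: (i \in S); case jS: (j \in S) => /=; rewrite ?(mulr1, mulr0, addr0, add0r).
- exact: mul_le_sqr_bound.
- by rewrite mulr_ge0_le0 ?uS ?uC ?jS.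
- by rewrite mulr_le0_ge0 ?uS ?uC ?iS.
- exact: mul_le_sqr_bound.
Qed.

End AdjacencyForm.

Lemma cut_volume_identity (R : realFieldType) (x y c : R) :
  0 <= x -> 0 <= y -> 0 <= c ->
  x + y - ((x + c) ^+ 2 + (y + c) ^+ 2) / (x + y + c + c)
  = 2 * (x - (x + c) ^+ 2 / (x + y + c + c)).
Proof.
move=> x0 y0 c0; have [V0|V0] := eqVneq (x + y + c + c) 0.
  have [-> -> ->] : [/\ x = 0, y = 0 & c = 0] by split; lra.
  by rewrite !(addr0, mulr0, mul0r, expr0n, subrr).
by field.
Qed.

Section ModularityMatrix.
Variables (R : rcfType) (n : nat) (e : rel 'I_n).

Lemma modmx_form (v : 'cV[R]_n) :
  (v^T *m modmx R e *m v) 0 0 =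
  adjform e (invsqrtD R e *m v) (invsqrtD R e *m v)
  - ((vol e setT)%:R)^-1 * ((sqrtdeg R e)^T *m v) 0 0 ^+ 2.
Proof.
rewrite /modmx /adjform mulmxBr mulmxBl mxE [X in _ + X]mxE; congr (_ - _).
  by rewrite trmx_mul /invsqrtD tr_diag_mx !mulmxA.
rewrite -scalemxAr -scalemxAl mxE; congr (_ * _).
rewrite mulmxA -(mulmxA _ _ v) -[v^T *m sqrtdeg R e]trmxK trmx_mul trmxK.
by rewrite mxE big_ord1 mxE expr2.
Qed.

Lemma invsqrtD_mulE (v : 'cV[R]_n) i :
  (invsqrtD R e *m v) i 0 = (Num.sqrt (deg e i)%:R)^-1 * v i 0.
Proof. by rewrite /invsqrtD mul_diag_mx !mxE. Qed.

Lemma invsqrtD_mul_sqr (v : 'cV[R]_n) i :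
  (invsqrtD R e *m v) i 0 ^+ 2 = v i 0 ^+ 2 / (deg e i)%:R.
Proof. by rewrite invsqrtD_mulE exprMn exprVn sqr_sqrtr ?ler0n // mulrC. Qed.

Lemma eigenvalue_form (v : 'cV[R]_n) (mu : R) :
  modmx R e *m v = mu *: v -> \sum_i v i 0 ^+ 2 = 1 ->
  mu = (v^T *m modmx R e *m v) 0 0.
Proof.
move=> Mv v1; rewrite -mulmxA Mv -scalemxAr mxE -[LHS]mulr1 -v1 mxE.
by congr (_ * _); apply: eq_bigr => i _; rewrite !mxE expr2.
Qed.

Lemma eigenvalue_le_uncut (v : 'cV[R]_n) (mu : R) (S : {set 'I_n}) :
  modmx R e *m v = mu *: v -> \sum_i v i 0 ^+ 2 = 1 ->
  (forall i, i \in S -> 0 <= v i 0) -> (forall i, i \notin S -> v i 0 <= 0) ->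
  mu <= \big[Num.max/0]_i (v i 0 ^+ 2 / (deg e i)%:R)
        * (adjform e (charvec R S) (charvec R S)
           + adjform e (charvec R (~: S)) (charvec R (~: S))).
Proof.
move=> Mv v1 vS vC; set u := invsqrtD R e *m v.
have mu_le_u : mu <= adjform e u u.
  rewrite (eigenvalue_form Mv v1) modmx_form lerBlDr lerDl.
  by rewrite mulr_ge0 ?sqr_ge0 ?invr_ge0 ?ler0n.
apply: le_trans mu_le_u (adjform_sign_split _ _ _ _) => i; rewrite /u.
- by move/vS; rewrite invsqrtD_mulE; apply: mulr_ge0; rewrite invr_ge0 sqrtr_ge0.
- by move/vC; rewrite invsqrtD_mulE; apply: mulr_ge0_le0; rewrite invr_ge0 sqrtr_ge0.
- by rewrite invsqrtD_mul_sqr; apply: (le_bigmax 0 (fun i => _ / _)).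
Qed.

Lemma double_modularity (S : {set 'I_n}) : symmetric e ->
  2 * modularity R e S =
  adjform e (charvec R S) (charvec R S)
  + adjform e (charvec R (~: S)) (charvec R (~: S))
  - ((vol e S)%:R ^+ 2 + (vol e (~: S))%:R ^+ 2) / (vol e setT)%:R.
Proof.
move=> esym; set x := adjform e _ (charvec R S); set y := adjform e _ _.
set c := adjform e (charvec R S) (charvec R (~: S)).
have volS : (vol e S)%:R = x + c.
  by rewrite -adjform_charvecT -(charvecDC R S) adjformDr.
have volC : (vol e (~: S))%:R = y + c.
  rewrite -adjform_charvecT -(charvecDC R S) adjformDr addrC.
  by congr (_ + _); apply: adjformC.
have volV : (vol e setT)%:R = x + y + c + c.
  by rewrite (vol_setTC e S) natrD volS volC; ring.
rewrite /modularity -/(adjform e _ _) -/x volS volC volV cut_volume_identity //;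
  by apply: adjform_ge0; apply: charvec_ge0.
Qed.

End ModularityMatrix.

Theorem theorem5p1 (R : rcfType) (n : nat) (e : rel 'I_n)
  (v : 'cV[R]_n) (mu : R) :
  simple_graph e -> connected_graph e ->
  modmx R e *m v = mu *: v -> 0 < mu ->
  \sum_(i < n) v i 0 ^+ 2 = 1 ->
  let S := [set i | 0 <= v i 0] in
  mu > ((vol e S)%:R ^+ 2 + (vol e (~: S))%:R ^+ 2) / (vol e setT)%:R
         * \big[Num.max/0]_(i < n) (v i 0 ^+ 2 / (deg e i)%:R) ->
  0 < modularity R e S.
Proof.
move=> [esym _] _ Mv _ v1 S muM.
have vS i : i \in S -> 0 <= v i 0 by rewrite inE.
have vC i : i \notin S -> v i 0 <= 0 by rewrite inE -ltNge => /ltW.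
have M0 : 0 <= \big[Num.max/0]_(i < n) (v i 0 ^+ 2 / (deg e i)%:R).
  exact: bigmax_ge_id.
move: muM M0 (eigenvalue_le_uncut Mv v1 vS vC) (double_modularity R S esym).
nra.
Qed.
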